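(* Let $\mathcal A$ be a unital C*-subalgebra of $l^\infty(\mathbb N)$ with maximal ideal space $X$ (weak* topology), and let $\iota:\mathbb N\to X$ be given by $\iota(n)(f)=f(n)$ for $f\in\mathcal A$. Then $\mathcal A$ is invariant under $\sigma_A$ (i.e. is an anqie) if and only if the map $\iota(n)\mapsto\iota(n+1)$ on $\iota(\mathbb N)$ extends to a continuous map from $X$ to $X$.
   Context: $\mathbb N=\{0,1,2,\ldots\}$ and $l^\infty(\mathbb N)$ is the C*-algebra of bounded complex-valued functions on $\mathbb N$; $\sigma_A:l^\infty(\mathbb N)\to l^\infty(\mathbb N)$ is $(\sigma_Af)(n)=f(n+1)$. An anqie is a unital C*-subalgebra of $l^\infty(\mathbb N)$ invariant under $\sigma_A$. The maximal ideal space of $\mathcal A$ is identified with the space of multiplicative states (nonzero characters) of $\mathcal A$. *)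

From Stdlib Require Import Reals List.
Open Scope R_scope.

Record Cplx : Type := mkC { Re : R; Im : R }.
Definition C0 : Cplx := mkC 0 0.
Definition C1 : Cplx := mkC 1 0.
Definition Cadd (z w : Cplx) : Cplx := mkC (Re z + Re w) (Im z + Im w).
Definition Copp (z : Cplx) : Cplx := mkC (- Re z) (- Im z).
Definition Csub (z w : Cplx) : Cplx := Cadd z (Copp w).
Definition Cmul (z w : Cplx) : Cplx :=
  mkC (Re z * Re w - Im z * Im w) (Re z * Im w + Im z * Re w).
Definition Cconj (z : Cplx) : Cplx := mkC (Re z) (- Im z).
Definition Cmod (z : Cplx) : R := sqrt (Re z * Re z + Im z * Im z).

(** Elements of l^infty(N) are bounded functions nat -> Cplx. *)
Definition bounded (f : nat -> Cplx) : Prop :=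
  exists M : R, forall n, Cmod (f n) <= M.

Definition shift (f : nat -> Cplx) : nat -> Cplx := fun n => f (S n).

Record unital_Cstar_subalgebra (A : (nat -> Cplx) -> Prop) : Prop := {
  cs_bounded : forall f, A f -> bounded f;
  cs_unit : A (fun _ => C1);
  cs_add : forall f g, A f -> A g -> A (fun n => Cadd (f n) (g n));
  cs_scal : forall (c : Cplx) f, A f -> A (fun n => Cmul c (f n));
  cs_mul : forall f g, A f -> A g -> A (fun n => Cmul (f n) (g n));
  cs_conj : forall f, A f -> A (fun n => Cconj (f n));
  cs_closed : forall f : nat -> Cplx,
      (forall eps, 0 < eps ->
         exists g, A g /\ forall n, Cmod (Csub (f n) (g n)) <= eps) ->
      A f
}.

Definition shift_invariant (A : (nat -> Cplx) -> Prop) : Prop :=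
  forall f, A f -> A (shift f).

(** A point of the maximal ideal space: a nonzero multiplicative
    (complex-)linear functional on A.  Functionals are represented as maps
    (nat -> Cplx) -> Cplx, of which only the values on A matter. *)
Record character (A : (nat -> Cplx) -> Prop) (phi : (nat -> Cplx) -> Cplx) : Prop := {
  ch_add : forall f g, A f -> A g ->
      phi (fun n => Cadd (f n) (g n)) = Cadd (phi f) (phi g);
  ch_scal : forall (c : Cplx) f, A f -> phi (fun n => Cmul c (f n)) = Cmul c (phi f);
  ch_mul : forall f g, A f -> A g ->
      phi (fun n => Cmul (f n) (g n)) = Cmul (phi f) (phi g);
  ch_nonzero : exists f, A f /\ phi f <> C0
}.

Definition iota (n : nat) : (nat -> Cplx) -> Cplx := fun f => f n.

Definition maps_X_to_X (A : (nat -> Cplx) -> Prop)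
    (T : ((nat -> Cplx) -> Cplx) -> ((nat -> Cplx) -> Cplx)) : Prop :=
  forall phi, character A phi -> character A (T phi).

(** The weak* topology on X is the topology
    of pointwise convergence on A, whose basic neighbourhoods of phi are
    { psi in X | |psi g_i - phi g_i| < delta, i = 1..k } for g_1..g_k in A;
    a map into X is continuous iff each psi |-> (T psi)(f), f in A, is. *)
Definition weakstar_continuous (A : (nat -> Cplx) -> Prop)
    (T : ((nat -> Cplx) -> Cplx) -> ((nat -> Cplx) -> Cplx)) : Prop :=
  forall phi, character A phi ->
  forall f, A f ->
  forall eps, 0 < eps ->
  exists (gs : list (nat -> Cplx)) (delta : R),
    0 < delta /\ Forall A gs /\
    forall psi, character A psi ->
      (forall g, In g gs -> Cmod (Csub (psi g) (phi g)) < delta) ->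
      Cmod (Csub (T psi f) (T phi f)) < eps.

(** T extends iota(n) |-> iota(n+1): T(iota n) = iota(n+1) as points of X
    (i.e. as functionals on A). *)
Definition extends_shift (A : (nat -> Cplx) -> Prop)
    (T : ((nat -> Cplx) -> Cplx) -> ((nat -> Cplx) -> Cplx)) : Prop :=
  forall n f, A f -> T (iota n) f = iota (S n) f.

(** If A is shift invariant, T phi = phi o sigma_A works.  Conversely let
    f in A and eps > 0.  A compactness argument (ultrafilter limits of points
    iota(m) are again points of X) turns continuity of T into uniform
    continuity of f(. + 1) for the pseudometric pdist gs of a finite family
    gs in A.  The same compactness argument shows that N is totally bounded
    for pdist gs.  Finally a partition of unity subordinate to a finite net,
    built from cut-off functions clamp01(...) which lie in A because a closed
    subalgebra is stable under moduli (square roots are uniform limits of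
    polynomials), approximates f(. + 1) within eps by elements of A; as A is
    closed, f(. + 1) is in A. *)

From Pilot Require Import Defs.
From Stdlib Require Import Reals List Lra Lia Psatz Classical FunctionalExtensionality ClassicalEpsilon.
From mathcomp Require filter.
Open Scope R_scope.

Lemma Ceq (z w : Cplx) : Re z = Re w -> Im z = Im w -> z = w.
Proof. destruct z, w; simpl; intros -> ->; reflexivity. Qed.

Lemma Cmod_ge0 (z : Cplx) : 0 <= Cmod z.
Proof. apply sqrt_pos. Qed.

Lemma Cmod_sq (z : Cplx) : Cmod z * Cmod z = Re z * Re z + Im z * Im z.
Proof. apply sqrt_sqrt; nra. Qed.

Lemma Cmod_sub_eq0 (z w : Cplx) : Cmod (Csub z w) = 0 -> z = w.
Proof.
  intros E. pose proof (Cmod_sq (Csub z w)) as Hsq. rewrite E in Hsq. simpl in Hsq.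
  pose proof (Rle_0_sqr (Re z + - Re w)); pose proof (Rle_0_sqr (Im z + - Im w)).
  unfold Rsqr in *.
  assert (Hre : (Re z + - Re w) * (Re z + - Re w) = 0) by lra.
  assert (Him : (Im z + - Im w) * (Im z + - Im w) = 0) by lra.
  apply Rmult_integral in Hre; apply Rmult_integral in Him.
  apply Ceq; lra.
Qed.

Lemma Cmod_real (a : R) : Cmod (mkC a 0) = Rabs a.
Proof.
  unfold Cmod; simpl. rewrite <- sqrt_Rsqr_abs. f_equal. unfold Rsqr; ring.
Qed.

Lemma Re_le_Cmod (z : Cplx) : Rabs (Re z) <= Cmod z.
Proof.
  rewrite <- sqrt_Rsqr_abs. apply sqrt_le_1_alt. unfold Rsqr. nra.
Qed.

Lemma Im_le_Cmod (z : Cplx) : Rabs (Im z) <= Cmod z.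
Proof.
  rewrite <- sqrt_Rsqr_abs. apply sqrt_le_1_alt. unfold Rsqr. nra.
Qed.

Lemma Cmod_le_ReIm (z : Cplx) : Cmod z <= Rabs (Re z) + Rabs (Im z).
Proof.
  pose proof (Rabs_pos (Re z)); pose proof (Rabs_pos (Im z)).
  rewrite <- (sqrt_Rsqr (Rabs (Re z) + Rabs (Im z))) by lra.
  apply sqrt_le_1_alt.
  pose proof (Rsqr_abs (Re z)); pose proof (Rsqr_abs (Im z)). unfold Rsqr in *. nra.
Qed.

Lemma Cmod_triangle (z w : Cplx) : Cmod (Cadd z w) <= Cmod z + Cmod w.
Proof.
  pose proof (Cmod_ge0 z); pose proof (Cmod_ge0 w).
  pose proof (Cmod_sq z); pose proof (Cmod_sq w).
  (* Cauchy--Schwarz in the plane *)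
  assert (Hcs : Re z * Re w + Im z * Im w <= Cmod z * Cmod w).
  { apply Rsqr_incr_0_var; [|nra]. unfold Rsqr.
    pose proof (Rle_0_sqr (Re z * Im w - Im z * Re w)). unfold Rsqr in *. nra. }
  rewrite <- (sqrt_Rsqr (Cmod z + Cmod w)) by lra.
  apply sqrt_le_1_alt. simpl. unfold Rsqr. nra.
Qed.

Lemma Cmod_mul (z w : Cplx) : Cmod (Cmul z w) = Cmod z * Cmod w.
Proof. unfold Cmod. rewrite <- sqrt_mult by nra. f_equal. simpl. ring. Qed.

Lemma Cmod_sub_sym (z w : Cplx) : Cmod (Csub z w) = Cmod (Csub w z).
Proof. unfold Cmod; simpl. f_equal. ring. Qed.

Lemma Cmod_sub_tri (z w v : Cplx) : Cmod (Csub z v) <= Cmod (Csub z w) + Cmod (Csub w v).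
Proof.
  replace (Csub z v) with (Cadd (Csub z w) (Csub w v)) by (apply Ceq; simpl; ring).
  apply Cmod_triangle.
Qed.

(** * Uniform approximation of the square root on [0,1]

    The iteration q_(k+1) = q_k + (t - q_k^2)/2, q_0 = 0, increases to sqrt t
    with error at most sqrt t (1 - sqrt t / 2)^k, hence uniformly on [0,1].
    Each q_k is a polynomial in t, which is what lets us take square roots
    inside a closed subalgebra. *)

Lemma pow_unit_interval (x : R) (k : nat) : 0 <= x <= 1 -> 0 <= x ^ k <= 1.
Proof. intros Hx; induction k; simpl; nra. Qed.

Fixpoint sqrt_iter (k : nat) (t : R) : R :=
  match k with
  | O => 0
  | S k => sqrt_iter k t + (t - sqrt_iter k t * sqrt_iter k t) / 2
  end.

Lemma sqrt_iter_error (k : nat) (t : R) : 0 <= t <= 1 ->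
  0 <= sqrt t - sqrt_iter k t <= sqrt t * (1 - sqrt t / 2) ^ k.
Proof.
  intros Ht. set (s := sqrt t).
  assert (Hs : s * s = t) by (apply sqrt_sqrt; lra).
  assert (Hs01 : 0 <= s <= 1).
  { split; [apply sqrt_pos|]. rewrite <- sqrt_1. apply sqrt_le_1_alt; lra. }
  induction k as [|k IH]; simpl; [lra|].
  fold s in IH. set (q := sqrt_iter k t) in *. set (P := (1 - s / 2) ^ k) in *.
  assert (HP : 0 <= P <= 1) by (apply pow_unit_interval; lra).
  assert (Hq : 0 <= q <= s) by nra.
  rewrite <- Hs.
  replace (s - (q + (s * s - q * q) / 2)) with ((s - q) * (1 - (s + q) / 2)) by field.
  split; [nra|].
  replace (s * ((1 - s / 2) * P)) with ((s * P) * (1 - s / 2)) by ring.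
  apply Rmult_le_compat; nra.
Qed.

(** The error bound s (1 - s/2)^k (with s = sqrt t) is at most s, and at most
    (1 - e/2)^k when s > e; so sqrt_iter converges uniformly on [0,1]. *)
Lemma sqrt_iter_uniform (eta : R) : 0 < eta ->
  exists k, forall t, 0 <= t <= 1 -> sqrt t - sqrt_iter k t <= eta.
Proof.
  intros Heta. set (e := Rmin eta 1).
  assert (He : 0 < e <= 1 /\ e <= eta) by (unfold e, Rmin; destruct Rle_dec; lra).
  destruct (pow_lt_1_zero (1 - e / 2)) with e as [N HN];
    [apply Rabs_def1; lra | lra |].
  exists N. intros t Ht. destruct (sqrt_iter_error N t Ht) as [_ Hb].
  set (s := sqrt t) in *.
  assert (Hs01 : 0 <= s <= 1).
  { split; [apply sqrt_pos|]. rewrite <- sqrt_1. apply sqrt_le_1_alt; lra. }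
  assert (Hp : 0 <= (1 - s / 2) ^ N <= 1) by (apply pow_unit_interval; lra).
  destruct (Rle_or_lt s e); [nra|].
  assert ((1 - s / 2) ^ N <= (1 - e / 2) ^ N) by (apply pow_incr; lra).
  specialize (HN N (le_n N)). rewrite Rabs_right in HN by (apply Rle_ge, pow_le; lra).
  nra.
Qed.

Definition clamp01 (t : R) : R := Rmin 1 (Rmax 0 t).

Lemma clamp01_range (t : R) : 0 <= clamp01 t <= 1.
Proof. unfold clamp01, Rmin, Rmax. repeat destruct Rle_dec; lra. Qed.

Lemma clamp01_pos (t : R) : 0 < clamp01 t -> 0 < t.
Proof. unfold clamp01, Rmin, Rmax. repeat destruct Rle_dec; lra. Qed.

Lemma clamp01_one (t : R) : 1 <= t -> clamp01 t = 1.
Proof. unfold clamp01, Rmin, Rmax. repeat destruct Rle_dec; lra. Qed.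

(** * Closure properties of a unital C*-subalgebra of l^infty(N)

    Besides the
    algebra operations, a closed subalgebra is stable under the moduli of its
    elements, and hence under the lattice operations on real elements. *)

Definition ofR (u : nat -> R) : nat -> Cplx := fun n => mkC (u n) 0.

Lemma Cmod_sub_ofR (u v : nat -> R) (n : nat) :
  Cmod (Csub (ofR u n) (ofR v n)) = Rabs (u n - v n).
Proof. rewrite <- Cmod_real. f_equal. apply Ceq; simpl; ring. Qed.

Section SubalgebraClosure.

Variable A : (nat -> Cplx) -> Prop.
Hypothesis HA : unital_Cstar_subalgebra A.

Lemma A_ext (f g : nat -> Cplx) : A f -> (forall n, f n = g n) -> A g.
Proof. intros Hf E. replace g with f; [exact Hf | apply functional_extensionality, E]. Qed.

Lemma A_ofR_ext (u v : nat -> R) : A (ofR u) -> (forall n, u n = v n) -> A (ofR v).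
Proof. intros Hu E. apply (A_ext _ _ Hu). intros n; unfold ofR; rewrite E; reflexivity. Qed.

Lemma A_const (c : Cplx) : A (fun _ => c).
Proof.
  apply (A_ext _ _ (cs_scal A HA c _ (cs_unit A HA))). intros n; apply Ceq; simpl; ring.
Qed.

Lemma A_bounded (g : nat -> Cplx) : A g -> exists M, 0 < M /\ forall n, Cmod (g n) <= M.
Proof.
  intros Hg. destruct (cs_bounded A HA g Hg) as [M HM].
  exists (Rmax 1 M). split; [pose proof (Rmax_l 1 M); lra|].
  intros n. eapply Rle_trans; [apply HM | apply Rmax_r].
Qed.

Lemma ofR_const (c : R) : A (ofR (fun _ => c)).
Proof. exact (A_const (mkC c 0)). Qed.

Lemma ofR_add (u v : nat -> R) : A (ofR u) -> A (ofR v) -> A (ofR (fun n => u n + v n)).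
Proof.
  intros Hu Hv. apply (A_ext _ _ (cs_add A HA _ _ Hu Hv)).
  intros n; apply Ceq; unfold ofR; simpl; ring.
Qed.

Lemma ofR_scal (c : R) (u : nat -> R) : A (ofR u) -> A (ofR (fun n => c * u n)).
Proof.
  intros Hu. apply (A_ext _ _ (cs_scal A HA (mkC c 0) _ Hu)).
  intros n; apply Ceq; unfold ofR; simpl; ring.
Qed.

Lemma ofR_mul (u v : nat -> R) : A (ofR u) -> A (ofR v) -> A (ofR (fun n => u n * v n)).
Proof.
  intros Hu Hv. apply (A_ext _ _ (cs_mul A HA _ _ Hu Hv)).
  intros n; apply Ceq; unfold ofR; simpl; ring.
Qed.

Lemma ofR_sub (u v : nat -> R) : A (ofR u) -> A (ofR v) -> A (ofR (fun n => u n - v n)).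
Proof.
  intros Hu Hv. apply (A_ofR_ext _ _ (ofR_add _ _ Hu (ofR_scal (-1) v Hv))).
  intros n; ring.
Qed.

(** Square roots of elements with values in [0,1]: limits of [sqrt_iter]. *)
Lemma sqrt_in_A (u : nat -> R) : A (ofR u) -> (forall n, 0 <= u n <= 1) ->
  A (ofR (fun n => sqrt (u n))).
Proof.
  intros Hu Hu01.
  assert (Hiter : forall k, A (ofR (fun n => sqrt_iter k (u n)))).
  { induction k as [|k IH]; simpl; [apply ofR_const|].
    apply (A_ofR_ext (fun n => sqrt_iter k (u n) +
             / 2 * (u n - sqrt_iter k (u n) * sqrt_iter k (u n)))).
    - apply ofR_add, ofR_scal, ofR_sub, ofR_mul; assumption.
    - intros n; unfold Rdiv; ring. }
  apply (cs_closed A HA). intros eps Heps.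
  destruct (sqrt_iter_uniform eps Heps) as [k Hk].
  exists (ofR (fun n => sqrt_iter k (u n))). split; [apply Hiter|].
  intros n. rewrite Cmod_sub_ofR.
  destruct (sqrt_iter_error k (u n) (Hu01 n)) as [H0 _].
  rewrite Rabs_right by lra. apply Hk, Hu01.
Qed.

(** The modulus of an element: rescale |h|^2 = h * conj h into [0,1] and take
    its square root. *)
Lemma modulus_in_A (h : nat -> Cplx) : A h -> A (ofR (fun n => Cmod (h n))).
Proof.
  intros Hh. destruct (A_bounded h Hh) as [M [HM0 HM]].
  set (w := fun n => (Re (h n) * Re (h n) + Im (h n) * Im (h n)) / (M * M)).
  assert (Hw : A (ofR w)).
  { apply (A_ofR_ext (fun n => / (M * M) * (Re (h n) * Re (h n) + Im (h n) * Im (h n)))).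
    - apply ofR_scal. apply (A_ext _ _ (cs_mul A HA _ _ Hh (cs_conj A HA _ Hh))).
      intros n; apply Ceq; unfold ofR; simpl; ring.
    - intros n; unfold w, Rdiv; ring. }
  assert (Hw01 : forall n, 0 <= w n <= 1).
  { intros n. pose proof (HM n). pose proof (Cmod_ge0 (h n)). unfold w. rewrite <- Cmod_sq.
    assert (Hr : 0 <= Cmod (h n) / M <= 1).
    { unfold Rdiv. split; [apply Rmult_le_pos; [lra | apply Rlt_le, Rinv_0_lt_compat; lra]|].
      apply (Rmult_le_reg_r M); [lra|]. rewrite Rmult_assoc, Rinv_l, Rmult_1_r by lra. lra. }
    replace (Cmod (h n) * Cmod (h n) / (M * M)) with ((Cmod (h n) / M) * (Cmod (h n) / M))
      by (field; lra).
    nra. }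
  apply (A_ofR_ext (fun n => M * sqrt (w n))).
  - apply ofR_scal, sqrt_in_A; assumption.
  - intros n. unfold w. rewrite <- Cmod_sq, sqrt_div_alt by nra.
    rewrite !sqrt_square by (try apply Cmod_ge0; lra). field; lra.
Qed.

(** Absolute values of real elements, and hence clamping to [0,1]:
    max(0,t) = (t + |t|)/2 and min(1,s) = (1 + s - |1 - s|)/2. *)
Lemma abs_in_A (u : nat -> R) : A (ofR u) -> A (ofR (fun n => Rabs (u n))).
Proof.
  intros Hu. apply (A_ofR_ext _ _ (modulus_in_A _ Hu)). intros n; apply Cmod_real.
Qed.

Lemma clamp01_in_A (u : nat -> R) : A (ofR u) -> A (ofR (fun n => clamp01 (u n))).
Proof.
  intros Hu.
  assert (Hmax : A (ofR (fun n => Rmax 0 (u n)))).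
  { apply (A_ofR_ext (fun n => / 2 * (u n + Rabs (u n)))).
    - apply ofR_scal, ofR_add, abs_in_A; assumption.
    - intros n. unfold Rmax, Rabs. destruct Rle_dec, Rcase_abs; lra. }
  apply (A_ofR_ext (fun n => / 2 * ((1 + Rmax 0 (u n)) - Rabs (1 - Rmax 0 (u n))))).
  - apply ofR_scal, ofR_sub; [apply ofR_add, Hmax; apply ofR_const|].
    apply abs_in_A, ofR_sub, Hmax; apply ofR_const.
  - intros n. unfold clamp01, Rmin, Rabs.
    destruct Rle_dec, Rcase_abs; lra.
Qed.

End SubalgebraClosure.

(** * Ultrafilters and limits along them

    Compactness of the maximal ideal space is used through ultrafilters: along
    an ultrafilter every bounded family of complex numbers has a (unique)
    limit, and limits respect the algebra operations. *)

Record ultrafilter {T : Type} (U : (T -> Prop) -> Prop) : Prop := {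
  uf_mono : forall S1 S2 : T -> Prop, U S1 -> (forall i, S1 i -> S2 i) -> U S2;
  uf_inter : forall S1 S2 : T -> Prop, U S1 -> U S2 -> U (fun i => S1 i /\ S2 i);
  uf_nonempty : forall S : T -> Prop, U S -> exists i, S i;
  uf_compl : forall S : T -> Prop, U S \/ U (fun i => ~ S i);
  uf_full : U (fun _ => True) }.

Lemma ultrafilter_extends (T J : Type) (ok : J -> Prop) (b : J -> T -> Prop) :
  (exists j, ok j) ->
  (forall j1 j2, ok j1 -> ok j2 ->
     exists j3, ok j3 /\ forall i, b j3 i -> b j1 i /\ b j2 i) ->
  (forall j, ok j -> exists i, b j i) ->
  exists U, ultrafilter U /\ forall j, ok j -> U (b j).
Proof.
  intros [j0 Hj0] Hdir Hne.
  set (F := fun S : T -> Prop => exists j, ok j /\ forall i, b j i -> S i).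
  assert (HF : filter.ProperFilter F).
  { apply filter.Build_ProperFilter.
    - intros [j [Hj HS]]. destruct (Hne j Hj) as [i Hi]. exact (HS i Hi).
    - apply filter.Build_Filter.
      + exists j0. split; [exact Hj0 | intros; exact Logic.I].
      + intros S1 S2 [j1 [H1 S1j]] [j2 [H2 S2j]].
        destruct (Hdir j1 j2 H1 H2) as [j3 [H3 Hsub]].
        exists j3. split; [exact H3|]. intros i Hi. destruct (Hsub i Hi); split; auto.
      + intros S1 S2 Hsub [j [Hj HS]]. exists j. split; auto. }
  destruct (filter.ultraFilterLemma HF) as [G [HG HFG]].
  exists G. split.
  - split.
    + intros S1 S2 H1 Hsub. exact (@filter.filterS _ G _ S1 S2 Hsub H1).
    + intros S1 S2 H1 H2. exact (@filter.filterI _ G _ S1 S2 H1 H2).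
    + intros S HS. exact (@filter.filter_ex _ G _ S HS).
    + intros S. destruct (filter.in_ultra_setVsetC S HG); auto.
    + apply HFG. exists j0. split; [exact Hj0 | intros; exact Logic.I].
  - intros j Hj. apply HFG. exists j. split; auto.
Qed.

Section UltraLimits.

Variable T : Type.
Variable U : (T -> Prop) -> Prop.
Hypothesis HU : ultrafilter U.

Lemma uf_and (S1 S2 S : T -> Prop) :
  U S1 -> U S2 -> (forall i, S1 i -> S2 i -> S i) -> U S.
Proof.
  intros H1 H2 H. apply (uf_mono U HU _ _ (uf_inter U HU _ _ H1 H2)).
  intros i [? ?]; auto.
Qed.

Lemma uf_forall_list (X : Type) (l : list X) (S : X -> T -> Prop) :
  (forall x, In x l -> U (S x)) -> U (fun i => forall x, In x l -> S x i).
Proof.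
  induction l as [|x l IH]; intros H.
  - apply (uf_mono U HU _ _ (uf_full U HU)). intros i _ x [].
  - apply (uf_and _ _ _ (H x (or_introl eq_refl)) (IH (fun y Hy => H y (or_intror Hy)))).
    intros i Hx Hl y [<-|Hy]; auto.
Qed.

(** Bounded real families converge: the limit is the supremum of the levels
    that the family eventually exceeds. *)
Lemma real_limit_exists (h : T -> R) (M : R) : (forall i, Rabs (h i) <= M) ->
  exists L, forall eta, 0 < eta -> U (fun i => Rabs (h i - L) < eta).
Proof.
  intros HM.
  assert (HMb : forall i, - M <= h i <= M) by (intros i; specialize (HM i); unfold Rabs in HM; destruct Rcase_abs in HM; lra).
  set (E := fun y => U (fun i => y <= h i)).
  assert (Hbound : bound E).
  { exists M. intros y Hy. destruct (uf_nonempty U HU _ Hy) as [i Hi].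
    specialize (HMb i); lra. }
  assert (Hinh : exists y, E y).
  { exists (- M). apply (uf_mono U HU _ _ (uf_full U HU)). intros i _. apply HMb. }
  destruct (completeness E Hbound Hinh) as [L [HLub HLleast]].
  exists L. intros eta Heta.
  assert (Hbelow : exists y, E y /\ L - eta < y).
  { apply NNPP; intros Hn. enough (L <= L - eta) by lra.
    apply HLleast. intros y Hy. apply Rnot_lt_le. intros Hlt. apply Hn. exists y; auto. }
  destruct Hbelow as [y [Hy Hly]].
  assert (Habove : ~ E (L + eta / 2)) by (intros Hc; specialize (HLub _ Hc); lra).
  destruct (uf_compl U HU (fun i => L + eta / 2 <= h i)) as [Hc | Hc]; [contradiction|].
  apply (uf_and _ _ _ Hy Hc). intros i H1 H2. apply Rabs_def1; lra.
Qed.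

Definition tends (h : T -> Cplx) (z : Cplx) : Prop :=
  forall eta, 0 < eta -> U (fun i => Cmod (Csub (h i) z) < eta).

Lemma tends_exists (h : T -> Cplx) (M : R) : (forall i, Cmod (h i) <= M) ->
  exists z, tends h z.
Proof.
  intros HM.
  destruct (real_limit_exists (fun i => Re (h i)) M) as [a Ha].
  { intros i. eapply Rle_trans; [apply Re_le_Cmod | apply HM]. }
  destruct (real_limit_exists (fun i => Im (h i)) M) as [b Hb].
  { intros i. eapply Rle_trans; [apply Im_le_Cmod | apply HM]. }
  exists (mkC a b). intros eta Heta.
  apply (uf_and _ _ _ (Ha (eta / 2) ltac:(lra)) (Hb (eta / 2) ltac:(lra))).
  intros i H1 H2. eapply Rle_lt_trans; [apply Cmod_le_ReIm|]. simpl. unfold Rminus in H1, H2. lra.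
Qed.

Lemma tends_unique (h : T -> Cplx) (z w : Cplx) : tends h z -> tends h w -> z = w.
Proof.
  intros Hz Hw. apply NNPP; intros Hne.
  set (r := Cmod (Csub z w)).
  assert (Hr : 0 < r).
  { destruct (Rle_lt_or_eq_dec 0 _ (Cmod_ge0 (Csub z w))) as [|E]; [assumption|].
    exfalso. apply Hne. apply Cmod_sub_eq0. symmetry; exact E. }
  destruct (uf_nonempty U HU _ (uf_inter U HU _ _ (Hz (r / 2) ltac:(lra)) (Hw (r / 2) ltac:(lra))))
    as [i [H1 H2]].
  pose proof (Cmod_sub_tri z (h i) w). rewrite Cmod_sub_sym in H1. unfold r in *. lra.
Qed.

Lemma tends_const (c : Cplx) : tends (fun _ => c) c.
Proof.
  intros eta Heta. apply (uf_mono U HU _ _ (uf_full U HU)). intros i _.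
  replace (Csub c c) with (mkC 0 0) by (apply Ceq; simpl; ring).
  rewrite Cmod_real, Rabs_R0. exact Heta.
Qed.

Lemma tends_add (h1 h2 : T -> Cplx) (z1 z2 : Cplx) :
  tends h1 z1 -> tends h2 z2 -> tends (fun i => Cadd (h1 i) (h2 i)) (Cadd z1 z2).
Proof.
  intros H1 H2 eta Heta.
  apply (uf_and _ _ _ (H1 (eta / 2) ltac:(lra)) (H2 (eta / 2) ltac:(lra))). intros i E1 E2.
  replace (Csub (Cadd (h1 i) (h2 i)) (Cadd z1 z2))
    with (Cadd (Csub (h1 i) z1) (Csub (h2 i) z2)) by (apply Ceq; simpl; ring).
  eapply Rle_lt_trans; [apply Cmod_triangle | lra].
Qed.

(** Products need a bound on one factor:
    h1 h2 - z1 z2 = h1 (h2 - z2) + z2 (h1 - z1). *)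
Lemma tends_mul (h1 h2 : T -> Cplx) (z1 z2 : Cplx) (M : R) :
  (forall i, Cmod (h1 i) <= M) -> tends h1 z1 -> tends h2 z2 ->
  tends (fun i => Cmul (h1 i) (h2 i)) (Cmul z1 z2).
Proof.
  intros HM H1 H2 eta Heta.
  assert (HM0 : 0 <= M).
  { destruct (uf_nonempty U HU _ (uf_full U HU)) as [i _].
    pose proof (HM i); pose proof (Cmod_ge0 (h1 i)); lra. }
  pose proof (Cmod_ge0 z2).
  set (e := eta / (M + Cmod z2 + 1)).
  assert (He : 0 < e) by (apply Rdiv_lt_0_compat; lra).
  assert (Heta_e : eta = (M + Cmod z2 + 1) * e) by (unfold e; field; lra).
  apply (uf_and _ _ _ (H1 e He) (H2 e He)). intros i E1 E2.
  replace (Csub (Cmul (h1 i) (h2 i)) (Cmul z1 z2))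
    with (Cadd (Cmul (h1 i) (Csub (h2 i) z2)) (Cmul z2 (Csub (h1 i) z1)))
    by (apply Ceq; simpl; ring).
  eapply Rle_lt_trans; [apply Cmod_triangle|]. rewrite !Cmod_mul.
  pose proof (HM i); pose proof (Cmod_ge0 (h1 i)); pose proof (Cmod_ge0 (Csub (h2 i) z2)).
  pose proof (Cmod_ge0 (Csub (h1 i) z1)).
  nra.
Qed.

Lemma tends_close (h1 h2 : T -> Cplx) (z : Cplx) :
  tends h1 z -> (forall eta, 0 < eta -> U (fun i => Cmod (Csub (h1 i) (h2 i)) < eta)) ->
  tends h2 z.
Proof.
  intros H1 H12 eta Heta.
  apply (uf_and _ _ _ (H1 (eta / 2) ltac:(lra)) (H12 (eta / 2) ltac:(lra))). intros i E1 E2.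
  pose proof (Cmod_sub_tri (h2 i) (h1 i) z). rewrite Cmod_sub_sym in E2. lra.
Qed.

Definition ulimit (h : T -> Cplx) : Cplx := epsilon (inhabits C0) (tends h).

Lemma ulimit_tends (h : T -> Cplx) (M : R) : (forall i, Cmod (h i) <= M) ->
  tends h (ulimit h).
Proof. intros HM. unfold ulimit. apply epsilon_spec. exact (tends_exists h M HM). Qed.

Lemma ulimit_eq (h : T -> Cplx) (z : Cplx) : tends h z -> ulimit h = z.
Proof.
  intros Hz. apply (tends_unique h); [|exact Hz].
  unfold ulimit. apply epsilon_spec. exists z; exact Hz.
Qed.

End UltraLimits.

Lemma one_neq_zero : Defs.C1 <> C0.
Proof. unfold Defs.C1, C0. intros E. injection E. lra. Qed.

(** A character does not vanish at the unit, since phi f = phi 1 * phi f. *)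
Lemma character_unit_nonzero (A : (nat -> Cplx) -> Prop) (phi : (nat -> Cplx) -> Cplx) :
  unital_Cstar_subalgebra A -> character A phi -> phi (fun _ => Defs.C1) <> C0.
Proof.
  intros HA Hphi E. destruct (ch_nonzero A phi Hphi) as [f [Hf Hpf]]. apply Hpf.
  pose proof (ch_mul A phi Hphi _ _ (cs_unit A HA) Hf) as Hmul. cbv beta in Hmul.
  replace (fun n => Cmul Defs.C1 (f n)) with f in Hmul
    by (apply functional_extensionality; intros n; apply Ceq; simpl; ring).
  rewrite Hmul, E. apply Ceq; simpl; ring.
Qed.

Lemma iota_character (A : (nat -> Cplx) -> Prop) (n : nat) :
  unital_Cstar_subalgebra A -> character A (iota n).
Proof.
  intros HA. split; try reflexivity.
  exists (fun _ => Defs.C1). split; [apply (cs_unit A HA) | exact one_neq_zero].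
Qed.

Lemma dual_shift_extends (A : (nat -> Cplx) -> Prop) :
  unital_Cstar_subalgebra A -> shift_invariant A ->
  exists T, maps_X_to_X A T /\ weakstar_continuous A T /\ extends_shift A T.
Proof.
  intros HA Hs. exists (fun phi f => phi (shift f)). split; [|split].
  - intros phi Hphi. split.
    + intros f g Hf Hg. apply (ch_add A phi Hphi); apply Hs; assumption.
    + intros c f Hf. apply (ch_scal A phi Hphi c (shift f)), Hs, Hf.
    + intros f g Hf Hg. apply (ch_mul A phi Hphi); apply Hs; assumption.
    + exists (fun _ => Defs.C1). split; [apply (cs_unit A HA)|].
      exact (character_unit_nonzero A phi HA Hphi).
  - intros phi Hphi f Hf eps Heps. exists (shift f :: nil), eps.
    split; [exact Heps|]. split; [constructor; [apply Hs, Hf | constructor]|].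
    intros psi _ Hclose. apply Hclose. left; reflexivity.
  - intros n f Hf. reflexivity.
Qed.

(** Every ultrafilter-limit of points iota(x i) is a point of the maximal
    ideal space (this is the compactness of X that the proof needs). *)
Section UltralimitCharacter.

Variable A : (nat -> Cplx) -> Prop.
Hypothesis HA : unital_Cstar_subalgebra A.
Variable T : Type.
Variable U : (T -> Prop) -> Prop.
Hypothesis HU : ultrafilter U.
Variable x : T -> nat.

Definition ultralimit_point (h : nat -> Cplx) : Cplx := ulimit T U (fun i => h (x i)).

Lemma ultralimit_point_tends (g : nat -> Cplx) :
  A g -> tends T U (fun i => g (x i)) (ultralimit_point g).
Proof.
  intros Hg. destruct (A_bounded A HA g Hg) as [M [_ HM]].
  apply (ulimit_tends T U HU _ M). intros i; apply HM.
Qed.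

Lemma ultralimit_point_character : character A ultralimit_point.
Proof.
  pose proof ultralimit_point_tends as Ht.
  split.
  - intros f g Hf Hg. apply (ulimit_eq T U HU). apply (tends_add T U HU); auto.
  - intros c f Hf. apply (ulimit_eq T U HU).
    apply (tends_mul T U HU _ _ _ _ (Cmod c)); [intros; apply Rle_refl | apply (tends_const T U HU) | auto].
  - intros f g Hf Hg. destruct (A_bounded A HA f Hf) as [M [_ HM]].
    apply (ulimit_eq T U HU). apply (tends_mul T U HU _ _ _ _ M); auto.
  - exists (fun _ => Defs.C1). split; [apply (cs_unit A HA)|].
    unfold ultralimit_point. rewrite (ulimit_eq T U HU _ Defs.C1 (tends_const T U HU Defs.C1)).
    exact one_neq_zero.
Qed.

End UltralimitCharacter.

(** * Total boundedness of N for the uniformity induced by A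

    A finite family gs in A defines the pseudometric
    pdist gs m n = sum_(g in gs) |g m - g n| on N; its balls are the traces on
    iota(N) of weak*-neighbourhoods in X. *)

Definition pdist (gs : list (nat -> Cplx)) (m n : nat) : R :=
  fold_right (fun g acc => Cmod (Csub (g m) (g n)) + acc) 0 gs.

Lemma pdist_ge0 (gs : list (nat -> Cplx)) (m n : nat) : 0 <= pdist gs m n.
Proof. induction gs as [|g gs IH]; simpl; [lra|]. pose proof (Cmod_ge0 (Csub (g m) (g n))); lra. Qed.

Lemma pdist_ge_term (gs : list (nat -> Cplx)) (g : nat -> Cplx) (m n : nat) :
  In g gs -> Cmod (Csub (g m) (g n)) <= pdist gs m n.
Proof.
  induction gs as [|g' gs IH]; simpl; [tauto|]. intros [<-|Hg].
  - pose proof (pdist_ge0 gs m n); lra.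
  - pose proof (IH Hg); pose proof (Cmod_ge0 (Csub (g' m) (g' n))); lra.
Qed.

Lemma pdist_small (gs : list (nat -> Cplx)) (m n : nat) (e : R) :
  (forall g, In g gs -> Cmod (Csub (g m) (g n)) < e) -> pdist gs m n <= INR (length gs) * e.
Proof.
  induction gs as [|g gs IH]; intros H; [simpl; lra|].
  change (Cmod (Csub (g m) (g n)) + pdist gs m n <= INR (S (length gs)) * e).
  rewrite S_INR. pose proof (H g (or_introl eq_refl)).
  pose proof (IH (fun g' Hg' => H g' (or_intror Hg'))). lra.
Qed.

Lemma pdist_in_A (A : (nat -> Cplx) -> Prop) (gs : list (nat -> Cplx)) (p : nat) :
  unital_Cstar_subalgebra A -> Forall A gs -> A (ofR (fun m => pdist gs m p)).
Proof.
  intros HA Hgs. induction Hgs as [|g gs Hg Hgs IH]; simpl; [apply ofR_const; exact HA|].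
  apply (ofR_add A HA); [|exact IH].
  apply (modulus_in_A A HA). apply (cs_add A HA _ _ Hg), (A_const A HA).
Qed.

Fixpoint chosen_prefix {X : Type} (next : list X -> X) (k : nat) : list X :=
  match k with O => nil | S k => next (chosen_prefix next k) :: chosen_prefix next k end.

Lemma chosen_prefix_in {X : Type} (next : list X -> X) (i j : nat) :
  (i < j)%nat -> In (next (chosen_prefix next i)) (chosen_prefix next j).
Proof.
  induction j as [|j IH]; intros Hij; [lia|]. simpl.
  destruct (Nat.eq_dec i j) as [->|Hne]; [left; reflexivity | right; apply IH; lia].
Qed.

Lemma separated_sequence (X : Type) (Rel : X -> X -> Prop) :
  (forall P : list X, exists x, forall p, In p P -> Rel p x) ->
  exists s : nat -> X, forall i j, (i < j)%nat -> Rel (s i) (s j).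
Proof.
  intros Havoid. destruct (Havoid nil) as [x0 _].
  set (next := fun P => epsilon (inhabits x0) (fun x => forall p, In p P -> Rel p x)).
  exists (fun k => next (chosen_prefix next k)). intros i j Hij.
  apply (epsilon_spec (inhabits x0) (fun x => forall p, In p (chosen_prefix next j) -> Rel p x)).
  - apply Havoid.
  - apply chosen_prefix_in, Hij.
Qed.

(** No sequence is uniformly separated for pdist: along an ultrafilter
    containing the tails of N every g (s k) converges, so two terms far out
    are close for all g in gs at once. *)
Lemma no_separated_sequence (A : (nat -> Cplx) -> Prop) (gs : list (nat -> Cplx))
    (d : R) (s : nat -> nat) :
  unital_Cstar_subalgebra A -> Forall A gs -> 0 < d ->
  exists i j, (i < j)%nat /\ pdist gs (s j) (s i) < d.
Proof.
  intros HA Hgs Hd. rewrite Forall_forall in Hgs.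
  destruct (ultrafilter_extends nat nat (fun _ => True) (fun N k => (N <= k)%nat))
    as [U [HU Htails]].
  { exists O; exact Logic.I. }
  { intros N1 N2 _ _. exists (Nat.max N1 N2). split; [exact Logic.I | intros k Hk; lia]. }
  { intros N _. exists N. lia. }
  pose proof (pos_INR (length gs)) as Hlen.
  set (e := d / (2 * (INR (length gs) + 1))).
  assert (He : 0 < e) by (apply Rdiv_lt_0_compat; lra).
  set (L := fun g => ultralimit_point nat U s g).
  set (W := fun k => forall g, In g gs -> Cmod (Csub (g (s k)) (L g)) < e).
  assert (HW : U W).
  { apply (uf_forall_list nat U HU). intros g Hg.
    apply (ultralimit_point_tends A HA nat U HU s g (Hgs g Hg) e He). }
  destruct (uf_nonempty U HU W HW) as [i Hi].
  destruct (uf_nonempty U HU _ (uf_inter U HU _ _ HW (Htails (S i) Logic.I)))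
    as [j [Hj Hij]].
  exists i, j. split; [exact Hij|].
  eapply Rle_lt_trans; [apply (pdist_small gs (s j) (s i) (2 * e))|].
  - intros g Hg. pose proof (Cmod_sub_tri (g (s j)) (L g) (g (s i))).
    rewrite (Cmod_sub_sym (L g)) in H. specialize (Hi g Hg); specialize (Hj g Hg). lra.
  - unfold e. replace (INR (length gs) * (2 * (d / (2 * (INR (length gs) + 1)))))
      with (d * (INR (length gs) / (INR (length gs) + 1))) by (field; lra).
    assert (INR (length gs) / (INR (length gs) + 1) < 1).
    { apply (Rmult_lt_reg_r (INR (length gs) + 1)); [lra|].
      unfold Rdiv. rewrite Rmult_assoc, Rinv_l, Rmult_1_r by lra. lra. }
    nra.
Qed.

Lemma finite_net (A : (nat -> Cplx) -> Prop) (gs : list (nat -> Cplx)) (d : R) :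
  unital_Cstar_subalgebra A -> Forall A gs -> 0 < d ->
  exists P : list nat, forall n, exists p, In p P /\ pdist gs n p < d.
Proof.
  intros HA Hgs Hd. apply NNPP; intros Hno.
  destruct (separated_sequence nat (fun p n => d <= pdist gs n p)) as [s Hs].
  { intros P. apply NNPP; intros Hn. apply Hno. exists P. intros n.
    apply NNPP; intros Hn'. apply Hn. exists n. intros p Hp.
    apply Rnot_lt_le. intros Hlt. apply Hn'. exists p; auto. }
  destruct (no_separated_sequence A gs d s HA Hgs Hd) as [i [j [Hij Hclose]]].
  specialize (Hs i j Hij). lra.
Qed.

(** * Approximation through a partition of unity *)

Definition small_oscillation (A : (nat -> Cplx) -> Prop) (F : nat -> Cplx) (eps : R) : Prop :=
  exists gs d, Forall A gs /\ 0 < d /\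
    forall m n, (forall g, In g gs -> Cmod (Csub (g m) (g n)) < d) ->
      Cmod (Csub (F m) (F n)) < eps.

Fixpoint blend (w : nat -> nat -> R) (F : nat -> Cplx) (P : list nat) (n : nat) : Cplx :=
  match P with
  | nil => C0
  | p :: P' => Cadd (Cmul (mkC (w p n) 0) (F p)) (Cmul (mkC (1 - w p n) 0) (blend w F P' n))
  end.

Lemma blend_in_A (A : (nat -> Cplx) -> Prop) (w : nat -> nat -> R) (F : nat -> Cplx)
    (P : list nat) :
  unital_Cstar_subalgebra A -> (forall p, A (ofR (w p))) -> A (blend w F P).
Proof.
  intros HA Hw. induction P as [|p P IH]; simpl; [apply (A_const A HA)|].
  apply (cs_add A HA).
  - exact (cs_mul A HA _ _ (Hw p) (A_const A HA (F p))).
  - apply (cs_mul A HA _ _ (ofR_sub A HA _ _ (ofR_const A HA 1) (Hw p)) IH).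
Qed.

Lemma blend_error (w : nat -> nat -> R) (F : nat -> Cplx) (P : list nat) (n : nat) (eps : R) :
  (forall p, 0 <= w p n <= 1) ->
  (forall p, 0 < w p n -> Cmod (Csub (F n) (F p)) <= eps) ->
  (exists p, In p P /\ w p n = 1) ->
  Cmod (Csub (F n) (blend w F P n)) <= eps.
Proof.
  intros Hw01 Hclose [p0 [Hp0 Hone]].
  induction P as [|p P IH]; [destruct Hp0|]. simpl.
  set (t := w p n). pose proof (Hw01 p) as Ht. fold t in Ht.
  replace (Csub (F n) (Cadd (Cmul (mkC t 0) (F p)) (Cmul (mkC (1 - t) 0) (blend w F P n))))
    with (Cadd (Cmul (mkC t 0) (Csub (F n) (F p)))
               (Cmul (mkC (1 - t) 0) (Csub (F n) (blend w F P n))))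
    by (apply Ceq; simpl; ring).
  eapply Rle_trans; [apply Cmod_triangle|].
  rewrite !Cmod_mul, !Cmod_real, (Rabs_right t), (Rabs_right (1 - t)) by lra.
  assert (Hnear : t * Cmod (Csub (F n) (F p)) <= t * eps).
  { destruct (Req_dec t 0) as [->|Hne]; [lra|].
    apply Rmult_le_compat_l; [lra|]. apply Hclose. unfold t in *; lra. }
  destruct Hp0 as [<-|Hp0].
  - fold t in Hone. rewrite Hone in *. lra.
  - pose proof (IH Hp0). pose proof (Hclose p). nra.
Qed.

(** A function of small oscillation is uniformly approximable by A: blend its
    values on a finite d/2-net for pdist gs, with cut-off weights supported in
    the pdist-balls of radius d. *)
Lemma small_oscillation_approx (A : (nat -> Cplx) -> Prop) (F : nat -> Cplx) (eps : R) :
  unital_Cstar_subalgebra A -> small_oscillation A F eps ->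
  exists g, A g /\ forall n, Cmod (Csub (F n) (g n)) <= eps.
Proof.
  intros HA [gs [d [Hgs [Hd HF]]]].
  assert (Hdist : forall m n, pdist gs m n < d -> Cmod (Csub (F m) (F n)) <= eps).
  { intros m n Hmn. apply Rlt_le, HF. intros g Hg.
    eapply Rle_lt_trans; [apply pdist_ge_term, Hg | exact Hmn]. }
  destruct (finite_net A gs (d / 2) HA Hgs ltac:(lra)) as [P HP].
  set (w := fun p n => clamp01 ((d - pdist gs n p) * (2 / d))).
  assert (H2d : 0 < 2 / d) by (apply Rdiv_lt_0_compat; lra).
  exists (blend w F P). split.
  - apply (blend_in_A A w F P HA). intros p. apply (clamp01_in_A A HA).
    apply (A_ofR_ext A (fun n => (2 / d) * (d - pdist gs n p))); [|intros n; ring].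
    apply (ofR_scal A HA), (ofR_sub A HA); [apply (ofR_const A HA) | apply (pdist_in_A A gs p HA Hgs)].
  - intros n. apply blend_error.
    + intros p. apply clamp01_range.
    + intros p Hp. apply Hdist. apply clamp01_pos in Hp. nra.
    + destruct (HP n) as [p [Hp Hnp]]. exists p. split; [exact Hp|].
      apply clamp01_one.
      replace ((d - pdist gs n p) * (2 / d)) with (2 - pdist gs n p * (2 / d)) by (field; lra).
      enough (pdist gs n p * (2 / d) <= 1) by lra.
      replace 1 with (d / 2 * (2 / d)) by (field; lra).
      apply Rmult_le_compat_r; lra.
Qed.

(** * From a continuous extension to uniform continuity of the shift *)

Lemma diagonal_ultralimit (A : (nat -> Cplx) -> Prop) (U : (nat * nat -> Prop) -> Prop) :
  unital_Cstar_subalgebra A -> ultrafilter U ->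
  (forall g, A g -> forall eta, 0 < eta ->
     U (fun mn => Cmod (Csub (g (fst mn)) (g (snd mn))) < eta)) ->
  forall g, A g -> tends _ U (fun mn => g (snd mn)) (ultralimit_point _ U fst g).
Proof.
  intros HA HU Hdiag g Hg.
  exact (tends_close _ U HU _ _ _ (ultralimit_point_tends A HA _ U HU fst g Hg) (Hdiag g Hg)).
Qed.

Lemma oscillation_ultrafilter (A : (nat -> Cplx) -> Prop) (F : nat -> Cplx) (eps : R) :
  ~ small_oscillation A F eps ->
  exists U, ultrafilter U /\
    (forall g, A g -> forall eta, 0 < eta ->
       U (fun mn => Cmod (Csub (g (fst mn)) (g (snd mn))) < eta)) /\
    U (fun mn => ~ Cmod (Csub (F (fst mn)) (F (snd mn))) < eps).
Proof.
  intros Hno.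
  set (ok := fun j : list (nat -> Cplx) * R => Forall A (fst j) /\ 0 < snd j).
  set (bad := fun (j : list (nat -> Cplx) * R) (mn : nat * nat) =>
    (forall g, In g (fst j) -> Cmod (Csub (g (fst mn)) (g (snd mn))) < snd j) /\
    ~ Cmod (Csub (F (fst mn)) (F (snd mn))) < eps).
  destruct (ultrafilter_extends (nat * nat) _ ok bad) as [U [HU Hbad]].
  - exists (nil, 1). split; [constructor | simpl; lra].
  - intros [gs1 d1] [gs2 d2] [H1 Hd1] [H2 Hd2]; simpl in *.
    exists (gs1 ++ gs2, Rmin d1 d2). split.
    + split; [apply Forall_app; auto | apply Rmin_glb_lt; assumption].
    + intros mn [Hmn Hfar]; simpl in *. split; split; try exact Hfar; intros g Hg;
        (eapply Rlt_le_trans; [apply Hmn; apply in_or_app; auto | first [apply Rmin_l | apply Rmin_r]]).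
  - intros [gs d] [Hgs Hd]. apply NNPP; intros Hempty. apply Hno. exists gs, d.
    split; [exact Hgs|]. split; [exact Hd|]. intros m n Hmn.
    apply NNPP; intros Hfar. apply Hempty. exists (m, n). split; assumption.
  - exists U. split; [exact HU|]. split.
    + intros g Hg eta Heta.
      apply (uf_mono U HU _ _ (Hbad (g :: nil, eta) (conj (Forall_cons _ Hg (Forall_nil _)) Heta))).
      intros mn [Hmn _]. apply Hmn. left; reflexivity.
    + apply (uf_mono U HU _ _ (Hbad (nil, 1) (conj (Forall_nil _) Rlt_0_1))).
      intros mn [_ Hfar]. exact Hfar.
Qed.

(** Compactness argument: otherwise the ultrafilter above gives a point phi
    of X approached by both iota(m) and iota(n), while T(iota m) f = f(m+1)
    and T(iota n) f = f(n+1) stay eps apart, contradicting continuity of T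
    at phi. *)
Lemma shift_small_oscillation (A : (nat -> Cplx) -> Prop)
    (T : ((nat -> Cplx) -> Cplx) -> ((nat -> Cplx) -> Cplx)) (f : nat -> Cplx) (eps : R) :
  unital_Cstar_subalgebra A -> weakstar_continuous A T -> extends_shift A T ->
  A f -> 0 < eps -> small_oscillation A (shift f) eps.
Proof.
  intros HA Hcont Hext Hf Heps. apply NNPP; intros Hno.
  destruct (oscillation_ultrafilter A (shift f) eps Hno) as [U [HU [Hdiag Hfar]]].
  set (phi := ultralimit_point _ U fst).
  pose proof (ultralimit_point_character A HA _ U HU fst) as Hphi.
  destruct (Hcont phi Hphi f Hf (eps / 2) ltac:(lra)) as [gs [d [Hd [Hgs Hnear]]]].
  rewrite Forall_forall in Hgs.
  assert (Hboth : U (fun mn => forall g, In g gs ->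
            Cmod (Csub (g (fst mn)) (phi g)) < d /\ Cmod (Csub (g (snd mn)) (phi g)) < d)).
  { apply (uf_forall_list _ U HU). intros g Hg. apply (uf_inter U HU).
    - exact (ultralimit_point_tends A HA _ U HU fst g (Hgs g Hg) d Hd).
    - exact (diagonal_ultralimit A U HA HU Hdiag g (Hgs g Hg) d Hd). }
  destruct (uf_nonempty U HU _ (uf_inter U HU _ _ Hboth Hfar)) as [[m n] [Hmn Hmn_far]].
  simpl in Hmn, Hmn_far. apply Hmn_far. unfold shift.
  pose proof (Hnear (iota m) (iota_character A m HA) (fun g Hg => proj1 (Hmn g Hg))) as Hm.
  pose proof (Hnear (iota n) (iota_character A n HA) (fun g Hg => proj2 (Hmn g Hg))) as Hn.
  rewrite (Hext m f Hf) in Hm. rewrite (Hext n f Hf) in Hn. unfold iota in Hm, Hn.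
  pose proof (Cmod_sub_tri (f (S m)) (T phi f) (f (S n))) as Htri.
  rewrite (Cmod_sub_sym (T phi f)) in Htri. lra.
Qed.

Theorem proposition2p3 (A : (nat -> Cplx) -> Prop) :
  unital_Cstar_subalgebra A ->
  (shift_invariant A <->
   exists T : ((nat -> Cplx) -> Cplx) -> ((nat -> Cplx) -> Cplx),
     maps_X_to_X A T /\ weakstar_continuous A T /\ extends_shift A T).
Proof.
  intros HA. split.
  - exact (dual_shift_extends A HA).
  -
    intros [T [_ [Hcont Hext]]] f Hf. apply (cs_closed A HA). intros eps Heps.
    apply (small_oscillation_approx A (shift f) eps HA).
    exact (shift_small_oscillation A T f eps HA Hcont Hext Hf Heps).
Qed.
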